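(* Let $G$ be a finite free graph with $n$ vertices. Then $\phi(G)\ge \frac{n}{\bar{\alpha}(G)}\ge \frac{n}{n-d(G)}$.
   Context: An independent set of $G$ is a free independent set if it is contained in at least two distinct maximal independent sets of $G$. $G$ is free if every vertex lies in some free independent set. The free chromatic number $\phi(G)$ is the minimum positive integer $t$ such that $V(G)$ can be partitioned into $t$ free independent sets. $\bar{\alpha}(G)$ denotes the maximum size of a free independent set of $G$. For an edge $e=uv$, $d(e)=|N(u)\cup N(v)|$ (the number of vertices lying in the neighborhood of $u$ or of $v$), and $d(G)=\min\{d(e): e\in E(G)\}$. *)

(* A finite simple graph: vertex type T : finType, adjacency
   e : rel T, assumed symmetric and irreflexive in the theorem. *)
From mathcomp Require Import all_boot all_order all_algebra.
Set Implicit Arguments. Unset Strict Implicit. Unset Printing Implicit Defensive.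

Section FreeColoring.
Variables (T : finType) (e : rel T).

Definition nbhd (u : T) : {set T} := [set w | e u w].

Definition independent (S : {set T}) : bool :=
  [forall x in S, forall y in S, ~~ e x y].

Definition maximal_independent (S : {set T}) : bool := maxset independent S.

Definition free_independent (S : {set T}) : bool :=
  independent S &&
  [exists I1 : {set T}, exists I2 : {set T},
     [&& maximal_independent I1, maximal_independent I2, I1 != I2,
         S \subset I1 & S \subset I2]].

Definition free_graph : Prop :=
  forall v : T, exists S : {set T}, free_independent S && (v \in S).

Definition free_partition (P : {set {set T}}) : bool :=
  partition P [set: T] && [forall S in P, free_independent S].

Definition free_chromatic_number : nat :=
  \big[minn/#|T|]_(P : {set {set T}} | free_partition P) #|P|.

Definition alpha_bar : nat :=
  \max_(S : {set T} | free_independent S) #|S|.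

Definition edge_d (u v : T) : nat := #|nbhd u :|: nbhd v|.

Definition graph_d : nat :=
  \big[minn/#|T|]_(u : T) \big[minn/#|T|]_(v : T | e u v) edge_d u v.

End FreeColoring.

(* A free independent set S lies in two distinct maximal independent sets I1
   and I2.  Some u in I1 is missing from I2, and by maximality of I2 it has a
   neighbour v in I2.  Then S avoids N(u) ∪ N(v), so |S| <= n - d(uv) <= n - d(G).
   For the other bound, every part of a free colouring has at most ᾱ(G)
   vertices, so n <= ᾱ(G) φ(G). *)
From mathcomp Require Import all_boot all_order all_algebra.
From mathcomp Require Import zify.
Import Order.TTheory GRing.Theory Num.Theory.

Set Implicit Arguments.
Unset Strict Implicit.
Unset Printing Implicit Defensive.

Section FreeIndependentBounds.
Variables (T : finType) (e : rel T).
Hypotheses (e_sym : symmetric e) (e_irr : irreflexive e).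

Lemma graph_d_le_edge_d u v : e u v -> (graph_d e <= edge_d e u v)%N.
Proof.
move=> euv; rewrite /graph_d -minEnat.
apply: leq_trans (bigmin_le_cond _ (edge_d e u) euv).
exact: bigmin_le _ u (fun x => \big[Order.min/_]_(y | e x y) edge_d e x y).
Qed.

Lemma independent_nonadj I x y :
  independent e I -> x \in I -> y \in I -> ~~ e x y.
Proof. by move=> /forall_inP indI xI; have /forall_inP := indI x xI; apply. Qed.

Lemma independent_setU1 I u :
  independent e I -> [forall v in I, ~~ e u v] -> independent e (u |: I).
Proof.
move=> indI /forall_inP nuI.
apply/forall_inP => x; rewrite in_setU1 => /predU1P[-> | xI];
  apply/forall_inP => y; rewrite in_setU1 => /predU1P[-> | yI].
- by rewrite e_irr.
- exact: nuI.
- by rewrite e_sym nuI.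
- exact: independent_nonadj indI xI yI.
Qed.

Lemma maximal_independent_dominating I u :
  maximal_independent e I -> u \notin I -> exists2 v, v \in I & e u v.
Proof.
case/maxsetP=> indI maxI uI; apply/exists_inP.
apply: contraT; rewrite negb_exists_in => nuI.
have := maxI _ (independent_setU1 indI nuI) (subsetUr _ _).
by move/setP/(_ u); rewrite setU11 (negbTE uI).
Qed.

Lemma free_independent_avoids_edge S :
  free_independent e S ->
  exists u v, e u v /\ S \subset ~: (nbhd e u :|: nbhd e v).
Proof.
case/andP=> _ /existsP [I1 /existsP [I2 /and5P [mI1 mI2 I12 SI1 SI2]]].
have /subsetPn [u uI1 uI2] : ~~ (I1 \subset I2).
  apply: contra I12 => /(maxsetP mI1).2 -> //; exact: (maxsetP mI2).1.
have [v vI2 euv] := maximal_independent_dominating mI2 uI2.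
exists u, v; split=> //; apply/subsetP => w wS.
have [wI1 wI2] := (subsetP SI1 w wS, subsetP SI2 w wS).
rewrite !inE negb_or (independent_nonadj (maxsetP mI1).1 uI1 wI1).
exact: independent_nonadj (maxsetP mI2).1 vI2 wI2.
Qed.

Lemma card_free_independent S :
  free_independent e S -> (#|S| <= #|T| - graph_d e)%N.
Proof.
case/free_independent_avoids_edge=> u [v [euv SC]].
have := subset_leq_card SC; have := cardsC (nbhd e u :|: nbhd e v).
have := graph_d_le_edge_d euv; rewrite /edge_d; lia.
Qed.

Lemma alpha_bar_le : (alpha_bar e <= #|T| - graph_d e)%N.
Proof. exact/bigmax_leqP/card_free_independent. Qed.

End FreeIndependentBounds.

Section FreeChromaticBound.
Variables (T : finType) (e : rel T).
Hypothesis free_e : free_graph e.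

Lemma alpha_bar_gt0 : (0 < #|T|)%N -> (0 < alpha_bar e)%N.
Proof.
case/card_gt0P=> v _; have [S /andP [freeS vS]] := free_e v.
by apply: leq_trans (leq_bigmax_cond _ freeS); apply/card_gt0P; exists v.
Qed.

Lemma card_le_alpha_bar_free_chromatic :
  (#|T| <= alpha_bar e * free_chromatic_number e)%N.
Proof.
(* The bound also holds for the default value #|T| of an empty minimum. *)
apply: (big_ind (fun k => #|T| <= alpha_bar e * k)%N).
- by have [-> | n_gt0] := posnP #|T|; rewrite // leq_pmull ?alpha_bar_gt0.
- by move=> k l; rewrite /minn; case: ifP.
- move=> P /andP [partP /forall_inP freeP].
  rewrite -cardsT (card_partition partP) mulnC -sum_nat_const.
  by apply: leq_sum => S /freeP; apply: leq_bigmax_cond.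
Qed.

End FreeChromaticBound.

Local Open Scope ring_scope.

Theorem mainTheorem3 (T : finType) (e : rel T)
    (e_sym : symmetric e) (e_irr : irreflexive e) :
  free_graph e ->
  ((#|T|%:R / (alpha_bar e)%:R : rat) <= (free_chromatic_number e)%:R) /\
  ((#|T|%:R / (#|T| - graph_d e)%:R : rat) <= #|T|%:R / (alpha_bar e)%:R).
Proof.
move=> free_e.
have [-> | n_gt0] := posnP #|T|; first by rewrite !mul0r.
have alpha_gt0 := alpha_bar_gt0 free_e n_gt0.
have alpha_le := alpha_bar_le e_sym e_irr.
split.
- rewrite ler_pdivrMr ?ltr0n // -natrM ler_nat mulnC.
  exact: card_le_alpha_bar_free_chromatic.
- rewrite ler_wpM2l // lef_pV2 ?posrE ?ltr0n ?ler_nat //.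
  exact: leq_trans alpha_le.
Qed.
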